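(* For every $i\ge0$ there exist constants $c^0_i,c^1_i,\tilde c^1_i\in\mathbb C$ such that, with $z=z_1$, $$\Pi^0_i=c^0_i\,z^{n i}\frac{d^{n i}}{dz^{n i}}F(z),\qquad \Pi^0_i\log z+\Pi^1_i=c^1_i\,z^{n i}\frac{d^{n i}}{dz^{n i}}\big(F(z)\log z+\tilde G(z)\big)+\tilde c^1_i\,\Pi^0_i .$$
   Context: Let $\theta_i=z_i\,\partial/\partial z_i$. Fix an integer $n\ge1$ and constants $a_0\neq0,a_1,a_2$. Consider the system $L_1=-n\theta_1\theta_2+\theta_1^2-a_0z_1(\theta_1+a_1)(\theta_1+a_2)$, $L_2=\theta_2^{n}-(-1)^n z_2\,(n\theta_2-\theta_1)(n\theta_2-\theta_1+1)\cdots(n\theta_2-\theta_1+n-1)$. Let $\Pi^0$ be the solution holomorphic at $0$ with $\Pi^0(0)=1$ and, for $a=1,2$, $\Pi^a=\Pi^0\log z_a+(\text{holomorphic at }0)$ solutions. Expand $\Pi^0=\sum_{i\ge0}\Pi^0_i(z_1)z_2^i$ and $\Pi^a=\Pi^0\log z_a+\sum_{i\ge0}\Pi^a_i(z_1)z_2^i$. Let $F(z)={}_2F_1(a_1,a_2;1;a_0z)=\sum_{k\ge0}\frac{(a_1)_k(a_2)_k}{(k!)^2}(a_0z)^k$ (Pochhammer symbols $(a)_k=a(a+1)\cdots(a+k-1)$), and $\tilde G(z)=\sum_{k\ge1}\frac{(a_1)_k(a_2)_k}{(k!)^2}\Big[\sum_{j=1}^2\sum_{l=0}^{k-1}\big(\tfrac1{a_j+l}-\tfrac1{1+l}\big)\Big](a_0z)^k$,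 so that $F$ and $F\log z+\tilde G$ are solutions of $\theta^2y-a_0z(\theta+a_1)(\theta+a_2)y=0$, $\theta=z\,d/dz$. *)

From HB Require Import structures.
From mathcomp Require Import all_boot all_order all_algebra.
Set Implicit Arguments. Unset Strict Implicit. Unset Printing Implicit Defensive.
Import Order.TTheory GRing.Theory Num.Theory.
Local Open Scope ring_scope.

Section Defs.
Variable C : numClosedFieldType.

(* formal power series in z1, z2:  ser f  ~  sum_{k,m} f k m z1^k z2^m *)
Definition ser := nat -> nat -> C.

(* "log-series" (u.1, u.2) represents  u.1 * log z1 + u.2  *)
Definition lser := (ser * ser)%type.

Definition ladd (u v : lser) : lser :=
  (fun k m => u.1 k m + v.1 k m, fun k m => u.2 k m + v.2 k m).
Definition lscale (c : C) (u : lser) : lser :=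
  (fun k m => c * u.1 k m, fun k m => c * u.2 k m).
Definition lzero : lser := (fun _ _ => 0, fun _ _ => 0).

(* theta_1 = z1 d/dz1 : theta_1 (f log z1 + g) = (theta_1 f) log z1 + theta_1 g + f *)
Definition th1 (u : lser) : lser :=
  (fun k m => k%:R * u.1 k m, fun k m => k%:R * u.2 k m + u.1 k m).
Definition th2 (u : lser) : lser :=
  (fun k m => m%:R * u.1 k m, fun k m => m%:R * u.2 k m).
Definition mz1 (u : lser) : lser :=
  (fun k m => if k is k'.+1 then u.1 k' m else 0,
   fun k m => if k is k'.+1 then u.2 k' m else 0).
Definition mz2 (u : lser) : lser :=
  (fun k m => if m is m'.+1 then u.1 k m' else 0,
   fun k m => if m is m'.+1 then u.2 k m' else 0).

Definition opj (n j : nat) (u : lser) : lser :=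
  ladd (ladd (lscale n%:R (th2 u)) (lscale (-1) (th1 u))) (lscale j%:R u).

Definition prodop (n : nat) (u : lser) : lser :=
  foldr (fun j v => opj n j v) u (iota 0 n).

Definition L1 (n : nat) (a0 a1 a2 : C) (u : lser) : lser :=
  let sh a v := ladd (th1 v) (lscale a v) in
  ladd (ladd (lscale (- n%:R) (th1 (th2 u))) (th1 (th1 u)))
       (lscale (- a0) (mz1 (sh a1 (sh a2 u)))).

Definition L2 (n : nat) (u : lser) : lser :=
  ladd (iter n th2 u) (lscale (- (-1) ^+ n) (mz2 (prodop n u))).

Definition poch (a : C) (k : nat) : C := \prod_(l < k) (a + l%:R).

(* coefficients of F(z) = 2F1(a1,a2;1;a0 z) *)
Definition Fcoef (a0 a1 a2 : C) (k : nat) : C :=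
  poch a1 k * poch a2 k / (k`!%:R ^+ 2) * a0 ^+ k.

(* coefficients of tilde G (the k = 0 coefficient is 0, the sum being empty) *)
Definition Gcoef (a0 a1 a2 : C) (k : nat) : C :=
  Fcoef a0 a1 a2 k *
  \sum_(l < k) (((a1 + l%:R)^-1 - (1 + l%:R)^-1) + ((a2 + l%:R)^-1 - (1 + l%:R)^-1)).

(* univariate formal Laurent-type series with log:  (p, q) ~ p log z + q,
   coefficients indexed by int (needed for intermediate derivatives) *)
Definition user := int -> C.
Definition luser := (user * user)%type.

Definition of_nat_ser (f : nat -> C) : user :=
  fun k => match k with Posz k' => f k' | Negz _ => 0 end.

(* d/dz (p log z + q) = p' log z + p / z + q' *)
Definition dz (u : luser) : luser :=
  (fun k => (k + 1)%:~R * u.1 (k + 1)%R,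
   fun k => (k + 1)%:~R * u.2 (k + 1)%R + u.1 (k + 1)%R).
Definition mzN (N : nat) (u : luser) : luser :=
  (fun k => u.1 (k - N%:Z)%R, fun k => u.2 (k - N%:Z)%R).
Definition zND (N : nat) (u : luser) : luser := mzN N (iter N dz u).

Definition luscale (c : C) (u : luser) : luser :=
  (fun k => c * u.1 k, fun k => c * u.2 k).
Definition luadd (u v : luser) : luser :=
  (fun k => u.1 k + v.1 k, fun k => u.2 k + v.2 k).

End Defs.

From HB Require Import structures.
From mathcomp Require Import all_boot all_order all_algebra.
From mathcomp Require Import ring zify.
From Stdlib Require Import FunctionalExtensionality.
Set Implicit Arguments. Unset Strict Implicit. Unset Printing Implicit Defensive.
Import Order.TTheory GRing.Theory Num.Theory.
Local Open Scope ring_scope.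

(* On the coefficient of z2^i, L1 becomes a first-order recurrence in
   the z1-degree k,
     (k+1)(k+1-ni) s_(k+1) = a0 (k+a1)(k+a2) s_k,
   for the holomorphic part, and its derivative in k (the Frobenius
   log-recurrence) for the pair (Pi^0_i, Pi^1_i).  As a0 (k+a1)(k+a2) never
   vanishes, a solution is determined by its value at k = ni, so the
   solutions form a line, and the log-solutions are determined modulo that
   line by their value at k = ni.  The coefficients of z^(ni) D^(ni) F and of
   z^(ni) D^(ni) (F log z + G) solve these recurrences and do not vanish at
   k = ni, while L2 shows by induction on i that Pi^0_i does not either. *)

Section RisingDual.
Variable R : numDomainType.

(* (y+1)(y+2)...(y+N) together with its derivative in y: the factor by which
   d^N/dz^N maps z^(y+N) log z to z^y log z, and the extra z^y it produces. *)
Fixpoint rise_dual (N : nat) (y : int) : R * R :=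
  if N is N'.+1 then
    let r := rise_dual N' (y + 1) in ((y + 1)%:~R * r.1, (y + 1)%:~R * r.2 + r.1)
  else (1, 0).

Lemma rise_dualS N y :
  (rise_dual N.+1 y).1 = (y + N.+1%:Z)%:~R * (rise_dual N y).1 /\
  (rise_dual N.+1 y).2 = (y + N.+1%:Z)%:~R * (rise_dual N y).2 + (rise_dual N y).1.
Proof.
elim: N y => [|N IH] y /=; first by split; ring.
by have [/= -> /= ->] := IH (y + 1); split; ring.
Qed.

Lemma rise_dual_neq0 N y : 0 <= y -> (rise_dual N y).1 != 0.
Proof.
elim: N y => [|N IH] y hy /=; first exact: oner_neq0.
by rewrite mulf_neq0 ?IH ?intr_eq0 //; lia.
Qed.

End RisingDual.

Section Derivatives.
Variable C : numClosedFieldType.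

Lemma iter_dz N (u : luser C) k :
  (iter N (@dz C) u).1 k = (rise_dual C N k).1 * u.1 (k + N%:Z) /\
  (iter N (@dz C) u).2 k =
    (rise_dual C N k).1 * u.2 (k + N%:Z) + (rise_dual C N k).2 * u.1 (k + N%:Z).
Proof.
elim: N k => [|N IH] k /=; first by rewrite addr0; split; ring.
have [-> ->] := IH (k + 1).
by rewrite (_ : k + 1 + N%:Z = k + N.+1%:Z); [split; ring | lia].
Qed.

Definition zND_coef (N k : nat) : C * C := rise_dual C N (k%:Z - N%:Z).

Lemma zND_of_nat N (f g : nat -> C) :
  zND N (of_nat_ser f, of_nat_ser g) =
  (of_nat_ser (fun k => (zND_coef N k).1 * f k),
   of_nat_ser (fun k => (zND_coef N k).1 * g k + (zND_coef N k).2 * f k)).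
Proof.
rewrite /zND /mzN; congr pair; apply: functional_extensionality => k;
have [h1 h2] := iter_dz N (of_nat_ser f, of_nat_ser g) (k - N%:Z);
rewrite /= ?h1 ?h2 subrK {h1 h2};
by case: k => k /=; rewrite ?(mulr0, addr0).
Qed.

Lemma of_nat_ser0 : of_nat_ser (fun _ : nat => 0) = (fun _ => 0 : C).
Proof. by apply: functional_extensionality => -[]. Qed.

Lemma luscale_of_nat c (f g : nat -> C) :
  luscale c (of_nat_ser f, of_nat_ser g) =
  (of_nat_ser (fun k => c * f k), of_nat_ser (fun k => c * g k)).
Proof. by congr pair; apply: functional_extensionality => -[] k /=; rewrite ?mulr0. Qed.

Lemma luadd_of_nat (f g f' g' : nat -> C) :
  luadd (of_nat_ser f, of_nat_ser g) (of_nat_ser f', of_nat_ser g') =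
  (of_nat_ser (fun k => f k + f' k), of_nat_ser (fun k => g k + g' k)).
Proof. by congr pair; apply: functional_extensionality => -[] k /=; rewrite ?addr0. Qed.

End Derivatives.

Section HypergeometricRecurrence.
Variable C : numFieldType.
Variables (a0 a1 a2 : C) (N : nat).
Hypothesis ha0 : a0 != 0.
Hypothesis ha1 : forall l : nat, a1 + l%:R != 0.
Hypothesis ha2 : forall l : nat, a2 + l%:R != 0.

Definition quad (k : nat) : C := (k%:R + a1) * (k%:R + a2).
Definition quad' (k : nat) : C := (k%:R + a1) + (k%:R + a2).

Definition hrec (s : nat -> C) := forall k : nat,
  k.+1%:R * (k.+1%:R - N%:R) * s k.+1 = a0 * quad k * s k.

(* The derivative in k of [hrec]: the recurrence satisfied by the pair of
   coefficient sequences of s1 log z + s2. *)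
Definition hrec_log (s1 s2 : nat -> C) := hrec s1 /\ forall k : nat,
  k.+1%:R * (k.+1%:R - N%:R) * s2 k.+1 + (k.+1%:R + (k.+1%:R - N%:R)) * s1 k.+1
    = a0 * (quad k * s2 k + quad' k * s1 k).

Lemma a0_quad_neq0 k : a0 * quad k != 0.
Proof. by rewrite /quad !mulf_neq0 // addrC. Qed.

Lemma hrec_eq0 s : hrec s -> s N = 0 -> forall k, s k = 0.
Proof.
move=> hs sN0.
have back k : s k.+1 = 0 -> (k.+1 <= N)%N -> s k = 0.
  move=> sk0 kN; move: (hs k); rewrite sk0 mulr0 => /esym/eqP.
  by rewrite mulf_eq0 (negbTE (a0_quad_neq0 k)) => /eqP.
have below d k : (k + d = N)%N -> s k = 0.
  elim: d k => [|d IH] k hk; first by move: sN0; rewrite -hk addn0.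
  by apply: back; [apply: IH | ]; lia.
have above d : s (N + d)%N = 0.
  elim: d => [|d IH]; first by rewrite addn0.
  move: (hs (N + d)%N); rewrite IH mulr0 addnS => /eqP.
  rewrite !mulf_eq0 pnatr_eq0 subr_eq0 eqr_nat -orbA => /orP[|/orP[]] /eqP //; lia.
move=> k; case: (ltnP k N) => kN; first by apply: (below (N - k)%N); lia.
by rewrite -(subnKC kN) above.
Qed.

Lemma hrec_neq0 s : hrec s -> s N != 0 -> forall d, s (N + d)%N != 0.
Proof.
move=> hs sN; elim=> [|d IH]; first by rewrite addn0.
apply/eqP => sd0; move: (hs (N + d)%N); rewrite -addnS sd0 mulr0 => /esym/eqP.
by rewrite mulf_eq0 (negbTE (a0_quad_neq0 _)) (negbTE IH).
Qed.

Lemma hrecB s1 s2 c : hrec s1 -> hrec s2 -> hrec (fun k => s1 k - c * s2 k).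
Proof.
move=> h1 h2 k; transitivity (k.+1%:R * (k.+1%:R - N%:R) * s1 k.+1
                       - c * (k.+1%:R * (k.+1%:R - N%:R) * s2 k.+1)); first ring.
by rewrite h1 h2; ring.
Qed.

Lemma hrec_log_span p q v w :
  hrec_log p q -> hrec_log v w -> v N != 0 -> p N != 0 ->
  exists c t, (forall k, p k = c * v k) /\ (forall k, q k = c * w k + t * p k).
Proof.
move=> [hp hq] [hv hw] vN pN.
pose c := p N / v N.
have pv k : p k = c * v k.
  have := hrec_eq0 (hrecB c hp hv); rewrite /c divfK // subrr.
  by move=> /(_ erefl k) /eqP; rewrite subr_eq0 => /eqP.
pose d k := q k - c * w k.
have hd : hrec d.
  move=> k; apply/eqP; rewrite -subr_eq0; apply/eqP; move: (hq k) (hw k).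
  rewrite /d !pv => eq eqw.
  transitivity ((k.+1%:R * (k.+1%:R - N%:R) * q k.+1
                 + (k.+1%:R + (k.+1%:R - N%:R)) * (c * v k.+1)
                 - a0 * (quad k * q k + quad' k * (c * v k)))
     - c * ((k.+1%:R * (k.+1%:R - N%:R) * w k.+1
             + (k.+1%:R + (k.+1%:R - N%:R)) * v k.+1)
            - a0 * (quad k * w k + quad' k * v k))); first ring.
  by rewrite eq eqw !subrr mulr0 subrr.
exists c, (d N / p N); split => // k.
have := hrec_eq0 (hrecB (d N / p N) hd hp); rewrite divfK // subrr.
by move=> /(_ erefl k) /eqP; rewrite subr_eq0 subr_eq => /eqP ->; ring.
Qed.

End HypergeometricRecurrence.

Section RecurrenceProducts.
Variable R : comPzRingType.
Variables (x M a A A' r0 r1 r0' r1' F0 F1 G0 G1 : R).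

(* A step of the product of two first-order recurrences r1 = (x/M) r0 and
   F1 = (A/x^2) F0, written without division; the log version is its
   derivative in the recurrence variable. *)
Lemma mul_rec_step : M * r1 = x * r0 -> x * x * F1 = A * F0 ->
  x * M * (r1 * F1) = A * (r0 * F0).
Proof.
move=> hr hF.
transitivity (x * F1 * (M * r1)); first ring.
rewrite hr; transitivity (r0 * (x * x * F1)); first ring.
by rewrite hF; ring.
Qed.

Lemma mul_rec_step_log :
  M * r1 = x * r0 -> M * r1' + r1 = x * r0' + r0 ->
  x * x * F1 = a * A * F0 -> x * x * G1 + (x + x) * F1 = a * (A * G0 + A' * F0) ->
  x * M * (r1 * G1 + r1' * F1) + (x + M) * (r1 * F1)
    = a * (A * (r0 * G0 + r0' * F0) + A' * (r0 * F0)).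
Proof.
move=> hr hr' hF hG.
have hr'' : M * r1' = x * r0' + r0 - r1 by rewrite -hr'; ring.
transitivity (x * G1 * (M * r1) + x * F1 * (M * r1') + x * r1 * F1 + F1 * (M * r1)).
  ring.
rewrite hr hr''.
transitivity (r0 * (x * x * G1 + (x + x) * F1) + r0' * (x * x * F1)); first ring.
by rewrite hG hF; ring.
Qed.

End RecurrenceProducts.

Section HypergeometricCoefficients.
Variable C : numClosedFieldType.
Variables (a0 a1 a2 : C).
Hypothesis ha0 : a0 != 0.
Hypothesis ha1 : forall l : nat, a1 + l%:R != 0.
Hypothesis ha2 : forall l : nat, a2 + l%:R != 0.

Lemma FcoefS k :
  Fcoef a0 a1 a2 k.+1 = Fcoef a0 a1 a2 k * (a0 * quad a1 a2 k) / k.+1%:R ^+ 2.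
Proof.
rewrite /Fcoef /poch /quad !big_ord_recr /= factS natrM (exprS a0).
have k1_neq0 : (k.+1%:R : C) != 0 by rewrite pnatr_eq0.
have fact_neq0 : (k`!%:R : C) != 0 by rewrite pnatr_eq0 -lt0n fact_gt0.
by field; rewrite nat1r pnatr_eq0 fact_neq0.
Qed.

Lemma Fcoef_rec k : k.+1%:R * k.+1%:R * Fcoef a0 a1 a2 k.+1
  = a0 * quad a1 a2 k * Fcoef a0 a1 a2 k.
Proof.
have k1_neq0 : (k.+1%:R : C) != 0 by rewrite pnatr_eq0.
by rewrite FcoefS; field; rewrite nat1r pnatr_eq0.
Qed.

Lemma Gcoef_rec k :
  k.+1%:R * k.+1%:R * Gcoef a0 a1 a2 k.+1 + (k.+1%:R + k.+1%:R) * Fcoef a0 a1 a2 k.+1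
    = a0 * (quad a1 a2 k * Gcoef a0 a1 a2 k + quad' a1 a2 k * Fcoef a0 a1 a2 k).
Proof.
rewrite /Gcoef big_ord_recr /= FcoefS /quad /quad'.
have k1_neq0 : (k.+1%:R : C) != 0 by rewrite pnatr_eq0.
by move: (ha1 k) (ha2 k) => h1 h2; field; rewrite nat1r pnatr_eq0 h1 h2.
Qed.

Lemma Fcoef_neq0 k : Fcoef a0 a1 a2 k != 0.
Proof.
elim: k => [|k IH].
  by rewrite /Fcoef /poch !big_ord0 fact0 mulr1n expr1n invr1 !mulr1 oner_neq0.
by rewrite FcoefS mulf_neq0 ?invr_neq0 ?expf_neq0 ?pnatr_eq0 // mulf_neq0 ?a0_quad_neq0.
Qed.

Lemma zND_coef_rec N k :
  (k.+1%:R - N%:R) * (zND_coef C N k.+1).1 = k.+1%:R * (zND_coef C N k).1 /\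
  (k.+1%:R - N%:R) * (zND_coef C N k.+1).2 + (zND_coef C N k.+1).1
    = k.+1%:R * (zND_coef C N k).2 + (zND_coef C N k).1.
Proof.
have [s1 s2] := rise_dualS C N (k%:Z - N%:Z); rewrite /= in s1 s2.
rewrite /zND_coef (_ : k%:Z - N%:Z + 1 = k.+1%:Z - N%:Z) in s1 s2; last by lia.
have eM : ((k.+1%:Z - N%:Z)%:~R : C) = k.+1%:R - N%:R by rewrite intrB.
have ek : ((k%:Z - N%:Z + N.+1%:Z)%:~R : C) = k.+1%:R.
  by rewrite (_ : _ + _ = k.+1%:Z) //; lia.
by rewrite eM ek in s1 s2; rewrite s1 s2.
Qed.

Definition zNDF N k := (zND_coef C N k).1 * Fcoef a0 a1 a2 k.
Definition zNDG N k :=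
  (zND_coef C N k).1 * Gcoef a0 a1 a2 k + (zND_coef C N k).2 * Fcoef a0 a1 a2 k.

Lemma hrec_log_zND N : hrec_log a0 a1 a2 N (zNDF N) (zNDG N).
Proof.
split => k; have [r1 r2] := zND_coef_rec N k.
  exact: mul_rec_step r1 (Fcoef_rec k).
exact: mul_rec_step_log r1 r2 (Fcoef_rec k) (Gcoef_rec k).
Qed.

Lemma zNDF_neq0 N : zNDF N N != 0.
Proof. by rewrite /zNDF mulf_neq0 ?Fcoef_neq0 ?rise_dual_neq0 ?subrr. Qed.

End HypergeometricCoefficients.

Section Z2Slices.
Variable C : numClosedFieldType.
Variables (n : nat) (a0 a1 a2 : C) (P0 P1 : ser C).
Hypothesis ha0 : a0 != 0.
Hypothesis ha1 : forall l : nat, a1 + l%:R != 0.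
Hypothesis ha2 : forall l : nat, a2 + l%:R != 0.
Hypothesis hL1 : L1 n a0 a1 a2 (P0, P1) = lzero C.
Hypothesis hL2 : L2 n (fun _ _ => 0, P0) = lzero C.
Hypothesis P00 : P0 0%N 0%N = 1.

Lemma hrec_log_slice i :
  hrec_log a0 a1 a2 (n * i) (fun k => P0 k i) (fun k => P1 k i).
Proof.
split => k; apply/eqP; rewrite -subr_eq0; apply/eqP.
  have := congr1 (fun u : lser C => u.1 k.+1 i) hL1.
  by rewrite /L1 /= /quad => <-; ring.
have := congr1 (fun u : lser C => u.2 k.+1 i) hL1.
by rewrite /L1 /= /quad /quad' => <-; ring.
Qed.

Lemma iter_th2 (u : lser C) N k m : (iter N (@th2 C) u).2 k m = m%:R ^+ N * u.2 k m.
Proof. by elim: N => [|N IH] /=; rewrite ?expr0 ?mul1r // IH exprS mulrA. Qed.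

Lemma foldr_opj (s : seq nat) k m :
  (foldr (fun j v => opj n j v) (fun _ _ => 0, P0) s).1 k m = 0 /\
  (foldr (fun j v => opj n j v) (fun _ _ => 0, P0) s).2 k m
    = (\prod_(j <- s) (n%:R * m%:R - k%:R + j%:R)) * P0 k m.
Proof.
elim: s => [|j s [e1 e2]] /=; first by rewrite big_nil mul1r.
by rewrite big_cons /opj /ladd /lscale /th1 /th2 /= e1 e2; split; ring.
Qed.

(* [hrec] carries non-vanishing from (n i, i) to (n (i+1), i), and the
   coefficient of z1^(n(i+1)) z2^(i+1) in L2 P0 gives
   (i+1)^n P0(n(i+1), i+1) = (-1)^n prod_(j<n) (j - n) P0(n(i+1), i). *)
Lemma P0_diag_neq0 i : P0 (n * i)%N i != 0.
Proof.
elim: i => [|i IH]; first by rewrite muln0 P00 oner_neq0.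
have Pni_neq0 : P0 (n * i.+1)%N i != 0.
  have := hrec_neq0 ha0 ha1 ha2 (hrec_log_slice i).1 IH n.
  by rewrite mulnS addnC.
have := congr1 (fun u : lser C => u.2 (n * i.+1)%N i.+1) hL2.
rewrite /L2 /ladd /lscale /mz2 /prodop /= iter_th2 (foldr_opj _ _ i).2 /=.
apply: contra_eqN => /eqP ->; rewrite mulr0 add0r !mulf_neq0 ?oppr_eq0 ?signr_eq0 //.
rewrite prodf_seq_neq0; apply/allP => j; rewrite mem_iota => /andP[_ jn].
rewrite (_ : n%:R * i%:R - (n * i.+1)%:R + j%:R = j%:R - n%:R :> C); last first.
  by rewrite mulnS natrD natrM; ring.
by rewrite subr_eq0 eqr_nat neq_ltn jn.
Qed.

End Z2Slices.

Theorem proposition4 (C : numClosedFieldType) (n : nat) (a0 a1 a2 : C)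
  (hn : (1 <= n)%N) (ha0 : a0 != 0)
  (ha1 : forall l : nat, a1 + l%:R != 0) (ha2 : forall l : nat, a2 + l%:R != 0)
  (P0 P1 : ser C)
  (hP0_1 : L1 n a0 a1 a2 (fun _ _ => 0, P0) = lzero C)
  (hP0_2 : L2 n (fun _ _ => 0, P0) = lzero C)
  (hP0_0 : P0 0%N 0%N = 1)
  (hP1_1 : L1 n a0 a1 a2 (P0, P1) = lzero C)
  (hP1_2 : L2 n (P0, P1) = lzero C) :
  forall i : nat, exists c0 c1 c1t : C,
    ((fun _ => 0), of_nat_ser (fun k => P0 k i))
      = luscale c0 (zND (n * i) ((fun _ => 0), of_nat_ser (Fcoef a0 a1 a2)))
    /\
    (of_nat_ser (fun k => P0 k i), of_nat_ser (fun k => P1 k i))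
      = luadd (luscale c1 (zND (n * i) (of_nat_ser (Fcoef a0 a1 a2),
                                        of_nat_ser (Gcoef a0 a1 a2))))
              (luscale c1t ((fun _ => 0), of_nat_ser (fun k => P0 k i))).
Proof.
move=> i.
have [c [t [eP0 eP1]]] := hrec_log_span ha0 ha1 ha2 (hrec_log_slice hP1_1 i)
  (hrec_log_zND ha0 ha1 ha2 (n * i)) (zNDF_neq0 ha0 ha1 ha2 (n * i))
  (P0_diag_neq0 ha0 ha1 ha2 hP1_1 hP0_2 hP0_0 i).
rewrite /= in eP0 eP1; exists c, c, t.
rewrite -of_nat_ser0 !zND_of_nat !luscale_of_nat luadd_of_nat.
split; congr pair; congr of_nat_ser; apply: functional_extensionality => k;
  rewrite ?eP1 ?eP0 /zNDF /zNDG; ring.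
Qed.
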